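(* Let $\omega\in\mathbb T^1\setminus\mathbb Q$, $f\in\mathcal V_\omega$, and let $\phi^+$ be a representative of the SNA of $f$. Let $\theta,\theta'\in\mathbb T^1$ with $d(\theta,\theta')<|E|/(4S)$ (where $|E|$ is the length of $E$), and suppose $\phi^+(\vartheta+\omega)=f_\vartheta(\phi^+(\vartheta))$ holds for every $\vartheta\in\{\theta+m\omega,\theta'+m\omega: m\in\mathbb Z\}$. For $n\in\mathbb N_0$ and $\eta,\eta'\in\mathbb T^1$ let $\wp^n(\eta,\eta')=\#\{m\in\mathbb Z: -1\le m<n-1,\ \phi^+(\eta+m\omega)\in C,\ \phi^+(\eta'+m\omega)\in C,\ \eta+m\omega\notin\mathcal I_0,\ \eta'+m\omega\notin\mathcal I_0\}$. Then for all $n\in\mathbb N$, $$d\big(\phi^+(\theta+n\omega),\phi^+(\theta'+n\omega)\big)\le\alpha^{2n-3\wp^n(\theta,\theta')}\,d\big(\phi^+(\theta),\phi^+(\theta')\big)+S\,d(\theta,\theta')\sum_{k=1}^n\alpha^{2(n-k)-3\wp^{n-k}(\theta+k\omega,\theta'+k\omega)}.$$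
   Context: Notation: $\mathbb T^1=\mathbb R/\mathbb Z$, $d$ the usual distance on $\mathbb T^1$, $\pi_1,\pi_2$ the coordinate projections of $\mathbb T^2=\mathbb T^1\times\mathbb T^1$, $\mathrm{Leb}$ Lebesgue measure on $\mathbb T^1$. Skew products: for irrational $\omega$, $\mathcal F_\omega$ is the set of $C^1$-diffeomorphisms $f$ of $\mathbb T^2$ homotopic to the identity of the form $f(\theta,x)=(\theta+\omega,f_\theta(x))$. Write $f^k_\theta(x)=\pi_2(f^k(\theta,x))$ for $k\in\mathbb Z$. Invariant graphs: a measurable $\phi:\mathbb T^1\to\mathbb T^1$ is an invariant graph if $f_\theta(\phi(\theta))=\phi(\theta+\omega)$ for Lebesgue-a.e. $\theta$; graphs agreeing a.e. are identified. Its Lyapunov exponent is $\lambda(\phi)=\int_{\mathbb T^1}\log|\partial_xf_\theta(\phi(\theta))|\,d\theta$. It is an SNA (resp. SNR) if $\lambda(\phi)<0$ (resp. $>0$) and there is no continuous function a.e. equal to $\phi$. The associated measure is $\mu_\phi(A)=\mathrm{Leb}(\pi_1(A\cap\Phi))$, $\Phi=\{(\theta,\phi(\theta))\}$. The class $\mathcal V_\omega$: $f\in\mathcal F_\omega$ belongs to $\mathcal V_\omega$ if the following hold for some choice of data. (i) There are disjoint closed intervals $C=[c^-,c^+]$, $E=[e^-,e^+]\subseteq\mathbb T^1$ and a set $\mathcal I_0\subseteq\mathbb T^1$ which is a union of $\mathcal N$ disjoint open intervals, and constants $\alpha>4$, $S>0$, such that: $f_\theta(x)\in\mathrm{int}(C)$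 whenever $x\notin(e^-,e^+)$ and $\theta\notin\mathcal I_0$; for all $\theta,\theta',x,x'$: $\alpha^{-2}d(x,x')\le d(f_\theta(x),f_\theta(x'))\le\alpha^2d(x,x')$ and $d(f_\theta(x),f_{\theta'}(x))\le S\,d(\theta,\theta')$; $|\partial_xf_\theta(x)|\le\alpha^{-1}$ for $x\in C$; $|\partial_xf_\theta(x)|\ge\alpha$ for $x\in E$. (ii) Integers $\kappa\ge2$, $K_0\ge1$, $K_n=K_0\kappa^n$, $b_0=1$, $b_n=(1-1/K_{n-1})b_{n-1}$, with $b=\lim_n b_n>\sqrt{5/6}$. A super-exponentially increasing integer sequence $(M_n)_{n\ge0}$ with $M_0\ge2$ and $M_{n+1}\le2\alpha^{M_n/16}$. A non-increasing positive sequence $(\varepsilon_n)$ with $\varepsilon_0\le1$ and $\varepsilon_{n+1}\le2\alpha^{-M_n/4}/s$ for a fixed $s>0$. Moreover $\alpha\ge\alpha_*$ and $\varepsilon_0\le\varepsilon_*$, where $\alpha_*>1,\varepsilon_*>0$ are thresholds guaranteeing $\sum_{n\ge0}(2K_nM_n+1)\mathcal N\varepsilon_n\le\sum_{n\ge0}\varepsilon_n^{1/2}<1/16$; and each component of $\mathcal I_0$ has length $<\varepsilon_0$. (iii) Critical regions: recursively $\mathcal A_n=(\mathcal I_n-(M_n-1)\omega)\times C$, $\mathcal B_n=(\mathcal I_n+(M_n+1)\omega)\times E$, $\mathcal I_{n+1}=\mathrm{int}\,\pi_1\big(f^{M_n-1}(\mathcal A_n)\cap f^{-(M_n+1)}(\mathcal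 B_n)\big)$. Let $\mathcal W_n^+=\bigcup_{j=0}^n\bigcup_{l=1}^{M_j+1}(\mathcal I_j+l\omega)$, $\mathcal W_n^-=\bigcup_{j=0}^n\bigcup_{l=-(M_j-1)}^{0}(\mathcal I_j+l\omega)$, $\mathcal W_{-1}^\pm=\emptyset$. For every $n\in\mathbb N$: $\mathcal I_j\ne\emptyset$ for $j\le n$; $\mathcal I_j\cap\bigcup_{k=1}^{2K_jM_j}(\mathcal I_j+k\omega)=\emptyset$ for $j=0,\dots,n$; $\big((\mathcal I_j-(M_j-1)\omega)\cup(\mathcal I_j+(M_j+1)\omega)\big)\cap(\mathcal W_{j-1}^+\cup\mathcal W_{j-1}^-)=\emptyset$ for $j=1,\dots,n$; and $\mathcal I_n$ has exactly $\mathcal N$ connected components, each of length $<\varepsilon_n$. (iv) $f$ has an SNA $\phi^+$ and an SNR $\phi^-$, and $\mu_{\phi^+},\mu_{\phi^-}$ are the only $f$-invariant ergodic probability measures. (v) $f$ is minimal. *)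

From Stdlib Require Import Reals Lra Lia ZArith Classical ClassicalEpsilon.
Open Scope R_scope.

(* The circle T^1 = R/Z, represented by real numbers (lifts).          *)

Definition eqT (x y : R) : Prop := exists k : Z, x - y = IZR k.

Definition dT (x y : R) : R := Rmin (frac_part (x - y)) (1 - frac_part (x - y)).

Definition irrational (w : R) : Prop :=
  forall p q : Z, q <> 0%Z -> w * IZR q <> IZR p.

(** closed arc [a, a+len] of T^1 (0 <= len < 1) *)
Definition inClosedArc (a len x : R) : Prop := frac_part (x - a) <= len.
Definition inOpenArc (a len x : R) : Prop :=
  0 < frac_part (x - a) /\ frac_part (x - a) < len.

Definition N_components_shorter (I : R -> Prop) (N : nat) (eps : R) : Prop :=
  exists (a l : nat -> R),
    (forall i, (i < N)%nat -> 0 < l i /\ l i < eps /\ l i <= 1) /\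
    (forall i j x, (i < N)%nat -> (j < N)%nat -> i <> j ->
        ~ (inOpenArc (a i) (l i) x /\ inOpenArc (a j) (l j) x)) /\
    (forall x, I x <-> exists i, (i < N)%nat /\ inOpenArc (a i) (l i) x).

Definition interior (P : R -> Prop) : R -> Prop :=
  fun t => exists d, 0 < d /\ forall u, Rabs (u - t) < d -> P u.

(* Skew products. A map f(theta,x) = (theta+omega, f_theta(x)) of T^2   *)
(* homotopic to the identity is given by a lift F with                  *)
(* F (theta+1) x = F theta x and F theta (x+1) = F theta x + 1;         *)
(* G is the fibre inverse, so f^{-1}(theta,y) = (theta-omega, G (theta-omega) y). *)

Definition cont2 (g : R -> R -> R) : Prop :=
  forall t x eps, 0 < eps -> exists d, 0 < d /\
    forall t' x', Rabs (t' - t) < d -> Rabs (x' - x) < d ->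
      Rabs (g t' x' - g t x) < eps.

Definition C1_2 (F : R -> R -> R) : Prop :=
  exists Fx Ft : R -> R -> R,
    (forall t x, derivable_pt_lim (fun y => F t y) x (Fx t x)) /\
    (forall t x, derivable_pt_lim (fun s => F s x) t (Ft t x)) /\
    cont2 Fx /\ cont2 Ft.

Definition skew_diffeo (F G : R -> R -> R) : Prop :=
  (forall t x, F (t + 1) x = F t x) /\
  (forall t x, F t (x + 1) = F t x + 1) /\
  C1_2 F /\ C1_2 G /\
  (forall t x, G t (F t x) = x) /\
  (forall t y, F t (G t y) = y).

Section Iterates.
Variables (w : R) (F G : R -> R -> R).

Fixpoint fwd (k : nat) (p : R * R) : R * R :=
  match k with
  | O => p
  | S k' => fwd k' (fst p + w, F (fst p) (snd p))
  end.

Fixpoint bwd (k : nat) (p : R * R) : R * R :=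
  match k with
  | O => p
  | S k' => bwd k' (fst p - w, G (fst p - w) (snd p))
  end.

Definition fZ (k : Z) (p : R * R) : R * R :=
  match k with
  | Z0 => p
  | Zpos q => fwd (Pos.to_nat q) p
  | Zneg q => bwd (Pos.to_nat q) p
  end.

Definition img (k : Z) (A : R * R -> Prop) : R * R -> Prop :=
  fun q => A (fZ (- k) q).

End Iterates.

Definition proj1T (A : R * R -> Prop) : R -> Prop := fun t => exists x, A (t, x).

Definition covers (A : R -> Prop) (a b : nat -> R) : Prop :=
  (forall k, a k <= b k) /\
  (forall t, 0 <= t < 1 -> A t -> exists k, a k < t < b k).

Definition cover_sums (A : R -> Prop) (s : R) : Prop :=
  exists a b, covers A a b /\ infinite_sum (fun k => b k - a k) s.

Definition is_glbR (E : R -> Prop) (r : R) : Prop :=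
  (forall s, E s -> r <= s) /\ (forall r', (forall s, E s -> r' <= s) -> r' <= r).

Definition leb (A : R -> Prop) (r : R) : Prop := is_glbR (cover_sums A) r.

Definition nullset (A : R -> Prop) : Prop := leb A 0.
Definition ae (P : R -> Prop) : Prop := nullset (fun t => ~ P t).

Definition leb_measurable (A : R -> Prop) : Prop :=
  forall B r1 r2 r3, leb B r1 -> leb (fun t => B t /\ A t) r2 ->
    leb (fun t => B t /\ ~ A t) r3 -> r1 = r2 + r3.

Definition measurableT (phi : R -> R) : Prop :=
  forall a len, 0 < len <= 1 ->
    leb_measurable (fun t => inOpenArc a len (phi t)).

(** Integral over T^1 of a bounded measurable function g, via the layer-cake
    formula: int g = -M + int_{-M}^{M} Leb{g > t} dt  when |g| <= M. *)
Definition integralT (g : R -> R) (v : R) : Prop :=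
  exists (M : R) (h : R -> R) (pr : Riemann_integrable h (- M) M),
    0 <= M /\ (forall t, Rabs (g t) <= M) /\
    (forall t, leb (fun u => g u > t) (h t)) /\
    v = - M + RiemannInt pr.

Definition invariant_graph (w : R) (F : R -> R -> R) (phi : R -> R) : Prop :=
  (forall t, eqT (phi (t + 1)) (phi t)) /\
  measurableT phi /\
  ae (fun t => eqT (F t (phi t)) (phi (t + w))).

Definition lyapunov (F : R -> R -> R) (phi : R -> R) (v : R) : Prop :=
  exists Fx : R -> R -> R,
    (forall t x, derivable_pt_lim (fun y => F t y) x (Fx t x)) /\
    integralT (fun t => ln (Rabs (Fx t (phi t)))) v.

Definition ae_continuous (phi : R -> R) : Prop :=
  exists psi : R -> R, continuity psi /\ (forall t, eqT (psi (t + 1)) (psi t)) /\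
    ae (fun t => eqT (phi t) (psi t)).

Definition SNA (w : R) (F : R -> R -> R) (phi : R -> R) : Prop :=
  invariant_graph w F phi /\ (exists v, lyapunov F phi v /\ v < 0) /\
  ~ ae_continuous phi.

Definition SNR (w : R) (F : R -> R -> R) (phi : R -> R) : Prop :=
  invariant_graph w F phi /\ (exists v, lyapunov F phi v /\ 0 < v) /\
  ~ ae_continuous phi.

Definition periodic2 (A : R * R -> Prop) : Prop :=
  forall t x, (A (t, x) <-> A (t + 1, x)) /\ (A (t, x) <-> A (t, x + 1)).

Definition open2 (A : R * R -> Prop) : Prop :=
  periodic2 A /\
  forall p, A p -> exists d, 0 < d /\ forall q,
    Rabs (fst q - fst p) < d -> Rabs (snd q - snd p) < d -> A q.

Definition sigma_algebra (Sg : (R * R -> Prop) -> Prop) : Prop :=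
  Sg (fun _ => True) /\
  (forall A, Sg A -> Sg (fun p => ~ A p)) /\
  (forall An : nat -> R * R -> Prop, (forall n, Sg (An n)) ->
      Sg (fun p => exists n, An n p)).

Definition borel2 (A : R * R -> Prop) : Prop :=
  periodic2 A /\
  forall Sg, sigma_algebra Sg -> (forall U, open2 U -> Sg U) -> Sg A.

Definition prob_measure (mu : (R * R -> Prop) -> R) : Prop :=
  (forall A B, (forall p, A p <-> B p) -> mu A = mu B) /\
  (forall A, borel2 A -> 0 <= mu A) /\
  mu (fun _ => True) = 1 /\
  (forall An : nat -> R * R -> Prop,
     (forall n, borel2 (An n)) ->
     (forall n m p, n <> m -> ~ (An n p /\ An m p)) ->
     infinite_sum (fun n => mu (An n)) (mu (fun p => exists n, An n p))).

Definition f_invariant (w : R) (F G : R -> R -> R) (mu : (R * R -> Prop) -> R) : Prop :=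
  forall A, borel2 A -> mu (fun p => A (fZ w F G 1 p)) = mu A.

Definition f_ergodic (w : R) (F G : R -> R -> R) (mu : (R * R -> Prop) -> R) : Prop :=
  forall A, borel2 A -> (forall p, A (fZ w F G 1 p) <-> A p) ->
    mu A = 0 \/ mu A = 1.

Definition is_graph_measure (phi : R -> R) (mu : (R * R -> Prop) -> R) : Prop :=
  forall A, borel2 A -> leb (fun t => A (t, phi t)) (mu A).

Definition minimal (w : R) (F G : R -> R -> R) : Prop :=
  forall p q d, 0 < d -> exists k : Z,
    dT (fst (fZ w F G k p)) (fst q) < d /\ dT (snd (fZ w F G k p)) (snd q) < d.

(* Data: C = [cL, cL+lenC], E = [eL, eL+lenE], I_0 = union of the N    *)
(* open arcs (a0 i, a0 i + l0 i), alpha, S, kappa, K0, (M n), (eps n), *)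
(* s, and the invariant graphs phip (SNA), phim (SNR).                 *)

Definition I0set (N : nat) (a0 l0 : nat -> R) : R -> Prop :=
  fun t => exists i, (i < N)%nat /\ inOpenArc (a0 i) (l0 i) t.

Section Critical.
Variables (w : R) (F G : R -> R -> R) (cL lenC eL lenE : R)
          (I0 : R -> Prop) (M : nat -> nat).

Definition inC (x : R) : Prop := inClosedArc cL lenC x.
Definition inE (x : R) : Prop := inClosedArc eL lenE x.

Fixpoint Iseq (n : nat) : R -> Prop :=
  match n with
  | O => I0
  | S k =>
    let Ak := fun q : R * R =>
      Iseq k (fst q + (INR (M k) - 1) * w) /\ inC (snd q) in
    let Bk := fun q : R * R =>
      Iseq k (fst q - (INR (M k) + 1) * w) /\ inE (snd q) in
    interior (proj1T (fun q =>
      img w F G (Z.of_nat (M k) - 1) Ak q /\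
      img w F G (- (Z.of_nat (M k) + 1)) Bk q))
  end.

Definition Wplus (n : nat) : R -> Prop :=
  fun t => exists j l, (j <= n)%nat /\ (1 <= l <= M j + 1)%nat /\
    Iseq j (t - INR l * w).
Definition Wminus (n : nat) : R -> Prop :=
  fun t => exists j l, (j <= n)%nat /\ (l <= M j - 1)%nat /\
    Iseq j (t + INR l * w).

End Critical.

Definition Kseq (K0 kappa : nat) (n : nat) : nat := (K0 * kappa ^ n)%nat.

Fixpoint bseq (K0 kappa : nat) (n : nat) : R :=
  match n with
  | O => 1
  | S k => (1 - / INR (Kseq K0 kappa k)) * bseq K0 kappa k
  end.

Definition super_exp_increasing (M : nat -> nat) : Prop :=
  (forall n, (M n < M (S n))%nat) /\
  (forall c, 0 < c -> exists n0, forall n, (n0 <= n)%nat -> c ^ n <= INR (M n)).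

Definition in_V (w : R) (F G : R -> R -> R)
    (cL lenC eL lenE : R) (N : nat) (a0 l0 : nat -> R) (alpha Slip : R)
    (kappa K0 : nat) (M : nat -> nat) (eps : nat -> R) (s : R)
    (phip phim : R -> R) : Prop :=
  let I0 := I0set N a0 l0 in
  let C := inC cL lenC in
  let E := inE eL lenE in
  irrational w /\ skew_diffeo F G /\
  (0 <= lenC < 1 /\ 0 <= lenE < 1 /\ (forall x, ~ (C x /\ E x))) /\
  (forall i, (i < N)%nat -> 0 < l0 i <= 1) /\
  (forall i j x, (i < N)%nat -> (j < N)%nat -> i <> j ->
      ~ (inOpenArc (a0 i) (l0 i) x /\ inOpenArc (a0 j) (l0 j) x)) /\
  4 < alpha /\ 0 < Slip /\
  (forall t x, ~ inOpenArc eL lenE x -> ~ I0 t -> inOpenArc cL lenC (F t x)) /\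
  (forall t x x', / (alpha ^ 2) * dT x x' <= dT (F t x) (F t x') /\
                  dT (F t x) (F t x') <= alpha ^ 2 * dT x x') /\
  (forall t t' x, dT (F t x) (F t' x) <= Slip * dT t t') /\
  (forall t x l, C x -> derivable_pt_lim (fun y => F t y) x l -> Rabs l <= / alpha) /\
  (forall t x l, E x -> derivable_pt_lim (fun y => F t y) x l -> alpha <= Rabs l) /\
  (2 <= kappa)%nat /\ (1 <= K0)%nat /\
  (exists b, Un_cv (bseq K0 kappa) b /\ sqrt (5 / 6) < b) /\
  super_exp_increasing M /\ (2 <= M 0%nat)%nat /\
  (forall n, INR (M (S n)) <= 2 * Rpower alpha (INR (M n) / 16)) /\
  (forall n, 0 < eps n) /\ (forall n, eps (S n) <= eps n) /\ eps 0%nat <= 1 /\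
  0 < s /\
  (forall n, eps (S n) <= 2 * Rpower alpha (- (INR (M n) / 4)) / s) /\
  (exists L1 L2,
     infinite_sum (fun n => (2 * INR (Kseq K0 kappa n) * INR (M n) + 1)
                             * INR N * eps n) L1 /\
     infinite_sum (fun n => sqrt (eps n)) L2 /\ L1 <= L2 /\ L2 < 1 / 16) /\
  (forall i, (i < N)%nat -> l0 i < eps 0%nat) /\
  (let I := Iseq w F G cL lenC eL lenE I0 M in
   (forall j, exists t, I j t) /\
   (forall j t k, (1 <= k <= 2 * Kseq K0 kappa j * M j)%nat ->
       ~ (I j t /\ I j (t - INR k * w))) /\
   (forall j t, (1 <= j)%nat ->
       ~ ((I j (t + (INR (M j) - 1) * w) \/ I j (t - (INR (M j) + 1) * w)) /\
          (Wplus w F G cL lenC eL lenE I0 M (j - 1) t \/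
           Wminus w F G cL lenC eL lenE I0 M (j - 1) t))) /\
   (forall n, N_components_shorter (I n) N (eps n))) /\
  SNA w F phip /\ SNR w F phim /\
  (forall mu, prob_measure mu -> f_invariant w F G mu -> f_ergodic w F G mu ->
     is_graph_measure phip mu \/ is_graph_measure phim mu) /\
  minimal w F G.

Definition indic (P : Prop) : nat :=
  if excluded_middle_informative P then 1%nat else 0%nat.

(** number of m in Z with -1 <= m < n-1 (i.e. m = j - 1, j = 0..n-1) such that
    phi(eta+m w), phi(eta'+m w) in C and eta+m w, eta'+m w notin I_0 *)
Fixpoint wp (w : R) (C I0 : R -> Prop) (phi : R -> R) (n : nat) (eta eta' : R) : nat :=
  match n with
  | O => O
  | S j =>
    let m := INR j - 1 in
    Nat.add (wp w C I0 phi j eta eta')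
     (indic (C (phi (eta + m * w)) /\ C (phi (eta' + m * w)) /\
            ~ I0 (eta + m * w) /\ ~ I0 (eta' + m * w)))
  end.

(** The estimate is a discrete Gronwall inequality for
    [D k = d(phi+(theta + k w), phi+(theta' + k w))].  One step of the skew
    product changes the base points by [S d(theta, theta')] and the fibre
    points by a factor at most [alpha^2]; when both preimages lie in [C] over
    base points outside [I_0] the factor improves to [alpha^-1 = alpha^(2-3)].
    The delicate point is that a contraction of lifts only contracts the
    circle distance if the two fibre points are joined by a short arc inside
    [C]: both images lie in the single lift of [int C] containing the image of
    [C] over the first base point, and they are [|E|/4]-close because the base
    points are [|E|/(4S)]-close, which is too little to leave that lift. *)
From Stdlib Require Import Reals ZArith Lra Lia Psatz ClassicalEpsilon.
Open Scope R_scope.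

Lemma dT_attained (x y : R) : exists k : Z, dT x y = Rabs (x - y - IZR k).
Proof.
  pose proof (base_fp (x - y)) as [Hf0 Hf1].
  pose proof (Rplus_Int_part_frac_part (x - y)) as Hxy.
  unfold dT. set (f := frac_part (x - y)) in *.
  destruct (Rle_dec f (1 - f)).
  - exists (Int_part (x - y)). rewrite Rmin_left, Rabs_right; lra.
  - exists (Int_part (x - y) + 1)%Z. rewrite Rmin_right, plus_IZR, Rabs_left; lra.
Qed.

Lemma dT_le (x y : R) (k : Z) : dT x y <= Rabs (x - y - IZR k).
Proof.
  pose proof (base_fp (x - y)) as [Hf0 Hf1].
  pose proof (Rplus_Int_part_frac_part (x - y)) as Hxy.
  unfold dT. set (f := frac_part (x - y)) in *. set (j := Int_part (x - y)) in *.
  destruct (Z.lt_total j k) as [Hlt|[Heq|Hgt]].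
  - assert (IZR j + 1 <= IZR k) by (rewrite <- plus_IZR; apply IZR_le; lia).
    apply Rle_trans with (1 - f); [apply Rmin_r|]. rewrite Rabs_left1; lra.
  - assert (IZR j = IZR k) by (f_equal; exact Heq).
    apply Rle_trans with f; [apply Rmin_l|]. rewrite Rabs_right; lra.
  - assert (IZR k + 1 <= IZR j) by (rewrite <- plus_IZR; apply IZR_le; lia).
    apply Rle_trans with f; [apply Rmin_l|]. rewrite Rabs_right; lra.
Qed.

Lemma dT_le_Rabs (x y : R) : dT x y <= Rabs (x - y).
Proof. rewrite <- (Rminus_0_r (x - y)). exact (dT_le x y 0). Qed.

Lemma dT_triangle (x y z : R) : dT x z <= dT x y + dT y z.
Proof.
  destruct (dT_attained x y) as [k1 ->]. destruct (dT_attained y z) as [k2 ->].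
  apply Rle_trans with (Rabs (x - z - IZR (k1 + k2))); [apply dT_le|].
  rewrite plus_IZR.
  replace (x - z - (IZR k1 + IZR k2)) with ((x - y - IZR k1) + (y - z - IZR k2)) by ring.
  apply Rabs_triang.
Qed.

Lemma dT_eqT (x x' y y' : R) : eqT x x' -> eqT y y' -> dT x y = dT x' y'.
Proof.
  intros [kx Hx] [ky Hy].
  assert (Hle : forall k u v u' v', u - v - IZR k = u' - v' -> dT u v <= dT u' v').
  { intros k u v u' v' Huv. destruct (dT_attained u' v') as [j ->].
    apply Rle_trans with (Rabs (u - v - IZR (k + j))); [apply dT_le|].
    rewrite plus_IZR. right; f_equal; lra. }
  apply Rle_antisym.
  - apply (Hle (kx - ky)%Z). rewrite minus_IZR. lra.
  - apply (Hle (ky - kx)%Z). rewrite minus_IZR. lra.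
Qed.

Lemma dT_eq_of_sub_eq (x y x' y' : R) : x - y = x' - y' -> dT x y = dT x' y'.
Proof. intros H. unfold dT. rewrite H. reflexivity. Qed.

Lemma dT_eq_Rabs (x y : R) : Rabs (x - y) + dT x y < 1 -> dT x y = Rabs (x - y).
Proof.
  intros H. destruct (dT_attained x y) as [k Hk].
  destruct (Z.eq_dec k 0) as [->|Hk0].
  - rewrite Hk. f_equal. simpl. ring.
  - exfalso.
    assert (1 <= Rabs (IZR k)) by (rewrite <- abs_IZR; apply IZR_le; lia).
    pose proof (Rabs_triang (x - y) (- (x - y - IZR k))) as Htri.
    rewrite Rabs_Ropp in Htri.
    replace (x - y + - (x - y - IZR k)) with (IZR k) in Htri by ring.
    lra.
Qed.

Lemma eqT_trans (x y z : R) : eqT x y -> eqT y z -> eqT x z.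
Proof. intros [k H] [j H']. exists (k + j)%Z. rewrite plus_IZR; lra. Qed.

Lemma inClosedArc_lift (a len x : R) :
  inClosedArc a len x -> exists y, eqT x y /\ a <= y <= a + len.
Proof.
  unfold inClosedArc. intros H. pose proof (base_fp (x - a)) as [Hf0 _].
  pose proof (Rplus_Int_part_frac_part (x - a)).
  exists (a + frac_part (x - a)). split; [exists (Int_part (x - a)) |]; lra.
Qed.

Lemma inClosedArc_of_lift (a len y : R) : len < 1 -> a <= y <= a + len -> inClosedArc a len y.
Proof.
  intros Hl Hy. unfold inClosedArc.
  destruct (Int_part_frac_part_spec (y - a) 0 (y - a)) as [_ <-]; simpl; lra.
Qed.

Lemma inOpenArc_lift (a len x : R) :
  inOpenArc a len x -> exists m : Z, a + IZR m < x < a + len + IZR m.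
Proof.
  unfold inOpenArc. intros H. pose proof (Rplus_Int_part_frac_part (x - a)).
  exists (Int_part (x - a)). lra.
Qed.

Lemma inOpenArc_endpoints (a len : R) (m : Z) : 0 <= len < 1 ->
  ~ inOpenArc a len (a + IZR m) /\ ~ inOpenArc a len (a + len + IZR m).
Proof.
  intros Hl. unfold inOpenArc. split.
  - destruct (Int_part_frac_part_spec (a + IZR m - a) m 0) as [_ <-]; lra.
  - destruct (Int_part_frac_part_spec (a + len + IZR m - a) m len) as [_ <-]; lra.
Qed.

Lemma inClosedArc_disjoint_len (a la b lb : R) : 0 <= la -> 0 <= lb ->
  (forall x, ~ (inClosedArc a la x /\ inClosedArc b lb x)) -> la + lb < 1.
Proof.
  unfold inClosedArc. intros Ha Hb Hdisj.
  assert (Hba : la < frac_part (b - a)).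
  { apply Rnot_le_lt. intros H. apply (Hdisj b). split; [exact H|].
    replace (b - b) with 0 by ring. rewrite fp_R0. exact Hb. }
  assert (Hab : lb < frac_part (a - b)).
  { apply Rnot_le_lt. intros H. apply (Hdisj a). split; [|exact H].
    replace (a - a) with 0 by ring. rewrite fp_R0. exact Ha. }
  pose proof (base_fp (b - a)) as [_ Hf1].
  pose proof (Rplus_Int_part_frac_part (b - a)).
  destruct (Int_part_frac_part_spec (a - b) (- Int_part (b - a) - 1) (1 - frac_part (b - a)))
    as [_ Hfab]; [lra | rewrite minus_IZR, opp_IZR; lra |].
  lra.
Qed.

Section DegreeOne.

Variable F : R -> R -> R.
Hypothesis F_add1 : forall t x, F t (x + 1) = F t x + 1.

Lemma F_addn (s x : R) (n : nat) : F s (x + INR n) = F s x + INR n.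
Proof.
  induction n as [|n IH].
  - simpl. rewrite !Rplus_0_r. reflexivity.
  - rewrite S_INR, <- Rplus_assoc, F_add1, IH. ring.
Qed.

Lemma F_addZ (s x : R) (k : Z) : F s (x + IZR k) = F s x + IZR k.
Proof.
  destruct (Z_le_gt_dec 0 k) as [Hk|Hk].
  - rewrite <- (Z2Nat.id k Hk), <- INR_IZR_INZ. apply F_addn.
  - pose proof (F_addn s (x + IZR k) (Z.to_nat (- k))) as H.
    rewrite INR_IZR_INZ, Z2Nat.id, opp_IZR in H by lia.
    replace (x + IZR k + - IZR k) with x in H by ring. lra.
Qed.

Lemma F_eqT (s x y : R) : eqT x y -> eqT (F s x) (F s y).
Proof.
  intros [k Hk]. exists k. replace x with (y + IZR k) by lra. rewrite F_addZ. ring.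
Qed.

End DegreeOne.

Definition wp_factor (alpha : R) (C I : R -> Prop) (phi : R -> R) (p p' : R) : R :=
  powerRZ alpha (2 - 3 * Z.of_nat (indic (C (phi p) /\ C (phi p') /\ ~ I p /\ ~ I p'))).

Section OneStep.

Variables (F Fx : R -> R -> R) (cL lenC eL lenE alpha Slip : R) (I0 : R -> Prop).
Hypothesis F_add1 : forall t x, F t (x + 1) = F t x + 1.
Hypothesis F_deriv : forall t x, derivable_pt_lim (fun y => F t y) x (Fx t x).
Hypothesis lenC_bounds : 0 <= lenC < 1.
Hypothesis lenE_bounds : 0 <= lenE < 1.
Hypothesis C_E_disjoint : forall x, ~ (inC cL lenC x /\ inE eL lenE x).
Hypothesis alpha_gt4 : 4 < alpha.
Hypothesis F_into_C :
  forall t x, ~ inOpenArc eL lenE x -> ~ I0 t -> inOpenArc cL lenC (F t x).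
Hypothesis F_contracts_C :
  forall t x l, inC cL lenC x -> derivable_pt_lim (fun y => F t y) x l -> Rabs l <= / alpha.
Hypothesis F_lipschitz_base : forall t t' x, dT (F t x) (F t' x) <= Slip * dT t t'.
Hypothesis F_lipschitz_fibre : forall t x x', dT (F t x) (F t x') <= alpha ^ 2 * dT x x'.

Lemma lenC_add_lenE_lt1 : lenC + lenE < 1.
Proof. apply (inClosedArc_disjoint_len cL lenC eL lenE); [lra | lra | exact C_E_disjoint]. Qed.

Lemma inC_notin_openE (x : R) : inC cL lenC x -> ~ inOpenArc eL lenE x.
Proof.
  intros HC [_ HE]. apply (C_E_disjoint x). split; [exact HC|].
  unfold inE, inClosedArc. lra.
Qed.

Lemma F_contracts_C_lift (s a b : R) :
  cL <= a <= cL + lenC -> cL <= b <= cL + lenC ->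
  Rabs (F s b - F s a) <= / alpha * Rabs (b - a).
Proof.
  intros Ha Hb.
  destruct (MVT_abs (fun y => F s y) (Fx s) a b) as [c [-> Hc]]; [intros; apply F_deriv|].
  apply Rmult_le_compat_r; [apply Rabs_pos|].
  apply (F_contracts_C s c); [|apply F_deriv].
  apply inClosedArc_of_lift; [lra|]. split.
  - apply Rle_trans with (Rmin a b); [apply Rmin_glb|]; lra.
  - apply Rle_trans with (Rmax a b); [|apply Rmax_lub]; lra.
Qed.

(** By connectedness, the image of the lift [[cL, cL + lenC]] of [C] stays in one lift
    of [int C]: it cannot cross the lifts of the endpoints of [C]. *)
Lemma F_C_lift_in_copy (p : R) : ~ I0 p ->
  exists m : Z, forall a, cL <= a <= cL + lenC -> cL + IZR m < F p a < cL + lenC + IZR m.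
Proof.
  intros Hp.
  assert (Hopen : forall a, cL <= a <= cL + lenC -> inOpenArc cL lenC (F p a)).
  { intros a Ha. apply F_into_C; [|exact Hp].
    apply inC_notin_openE, inClosedArc_of_lift; lra. }
  assert (Hcont : continuity (fun y => F p y)).
  { intros z. apply derivable_continuous_pt. exists (Fx p z). apply F_deriv. }
  assert (Hcross : forall a c, cL <= a <= cL + lenC ->
            (F p cL - c) * (F p a - c) <= 0 -> inOpenArc cL lenC c).
  { intros a c Ha Hsign.
    destruct (IVT_cor (fun y => F p y - c) cL a) as [s [Hs Hfs]].
    - apply continuity_minus; [exact Hcont | apply continuity_const; intros ? ?; reflexivity].
    - lra.
    - exact Hsign.
    - replace c with (F p s) by lra. apply Hopen. lra. }
  destruct (inOpenArc_lift _ _ _ (Hopen cL ltac:(lra))) as [m Hm].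
  destruct (inOpenArc_endpoints cL lenC m lenC_bounds) as [Hlo Hhi].
  exists m. intros a Ha. split; apply Rnot_le_lt; intros Hout.
  - apply Hlo, (Hcross a); [exact Ha | nra].
  - apply Hhi, (Hcross a); [exact Ha | nra].
Qed.

Lemma dT_F_contract (phi : R -> R) (p p' q x y : R) :
  inC cL lenC (phi p) -> inC cL lenC (phi p') -> ~ I0 p -> ~ I0 p' ->
  Slip * dT p p' < lenE / 4 ->
  eqT x (F p (phi p)) -> eqT y (F p' (phi p')) ->
  dT (F q x) (F q y) <= / alpha * dT x y.
Proof.
  intros HCx HCy Hp Hp' Hpp Hx Hy.
  pose proof lenC_add_lenE_lt1 as Hlen.
  assert (Hainv : / alpha < / 4) by (apply Rinv_lt_contravar; lra).
  assert (Hapos : 0 < / alpha) by (apply Rinv_0_lt_compat; lra).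
  destruct (inClosedArc_lift _ _ _ HCx) as [a [Ha Har]].
  destruct (inClosedArc_lift _ _ _ HCy) as [b [Hb Hbr]].
  destruct (F_C_lift_in_copy p Hp) as [m1 Hm1].
  destruct (F_C_lift_in_copy p' Hp') as [m2 Hm2].
  pose proof (Hm1 a Har) as HXr. pose proof (Hm1 b Hbr) as HZr. pose proof (Hm2 b Hbr) as HYr.
  set (X := F p a - IZR m1). set (Z := F p b - IZR m1). set (Y := F p' b - IZR m2).
  assert (HxX : eqT x X).
  { apply (eqT_trans _ _ _ Hx), (eqT_trans _ (F p a)); [apply F_eqT; assumption|].
    exists m1. unfold X. ring. }
  assert (HyY : eqT y Y).
  { apply (eqT_trans _ _ _ Hy), (eqT_trans _ (F p' b)); [apply F_eqT; assumption|].
    exists m2. unfold Y. ring. }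
  assert (HXZ : Rabs (X - Z) <= / alpha * lenC).
  { replace (X - Z) with (F p a - F p b) by (unfold X, Z; ring).
    apply Rle_trans with (/ alpha * Rabs (a - b)); [apply F_contracts_C_lift; lra|].
    apply Rmult_le_compat_l; [lra|]. apply Rabs_le. lra. }
  assert (HZY : Rabs (Z - Y) < lenE / 4).
  { assert (Hd : dT Z Y < lenE / 4).
    { rewrite <- (dT_eqT (F p b) Z (F p' b) Y); [|exists m1; unfold Z; ring|exists m2; unfold Y; ring].
      eapply Rle_lt_trans; [apply F_lipschitz_base | exact Hpp]. }
    assert (Habs : Rabs (Z - Y) < lenC) by (apply Rabs_def1; unfold Z, Y; lra).
    rewrite <- dT_eq_Rabs; lra. }
  assert (HXY : Rabs (X - Y) < 1 / 2).
  { replace (X - Y) with ((X - Z) + (Z - Y)) by ring.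
    eapply Rle_lt_trans; [apply Rabs_triang|]. nra. }
  assert (Hxy : dT x y = Rabs (X - Y)).
  { rewrite (dT_eqT x X y Y HxX HyY). apply dT_eq_Rabs.
    pose proof (dT_le_Rabs X Y). lra. }
  rewrite (dT_eqT (F q x) (F q X) (F q y) (F q Y)) by (apply F_eqT; assumption).
  rewrite Hxy. eapply Rle_trans; [apply dT_le_Rabs|].
  rewrite Rabs_minus_sym, (Rabs_minus_sym X Y).
  apply F_contracts_C_lift; unfold X, Y; lra.
Qed.

Lemma dT_F_step (phi : R -> R) (p p' q q' x y : R) :
  Slip * dT p p' < lenE / 4 ->
  eqT x (F p (phi p)) -> eqT y (F p' (phi p')) ->
  dT (F q x) (F q' y) <= wp_factor alpha (inC cL lenC) I0 phi p p' * dT x y + Slip * dT q q'.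
Proof.
  intros Hpp Hx Hy.
  eapply Rle_trans; [apply (dT_triangle _ (F q y))|].
  apply Rplus_le_compat; [|apply F_lipschitz_base].
  unfold wp_factor, indic.
  destruct (excluded_middle_informative _) as [(HCx & HCy & Hp & Hp')|_].
  - replace (powerRZ alpha _) with (/ alpha) by (simpl; field; lra).
    exact (dT_F_contract phi p p' q x y HCx HCy Hp Hp' Hpp Hx Hy).
  - replace (powerRZ alpha _) with (alpha ^ 2) by (simpl; ring).
    apply F_lipschitz_fibre.
Qed.

End OneStep.

(** [W j n] plays the role of the product of the factors [a j, ..., a (n-1)]. *)
Lemma affine_recursion_bound (D a : nat -> R) (W : nat -> nat -> R) (c : R) :
  (forall k, 0 <= a k) ->
  (forall k, D (S k) <= a k * D k + c) ->
  (forall j, W j j = 1) ->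
  (forall j n, (j <= n)%nat -> W j (S n) = W j n * a n) ->
  forall n, (1 <= n)%nat ->
  D n <= W 0%nat n * D 0%nat + c * sum_f_R0 (fun i => W (i + 1)%nat n) (n - 1).
Proof.
  intros Ha HD HW1 HWS n Hn.
  destruct n as [|n]; [lia|]. replace (S n - 1)%nat with n by lia.
  induction n as [|n IH].
  - simpl. rewrite (HWS 0 0)%nat, !HW1 by lia. specialize (HD 0%nat). lra.
  - rewrite tech5, HWS by lia.
    replace (S n + 1)%nat with (S (S n)) by lia. rewrite HW1.
    rewrite (sum_eq _ (fun i => W (i + 1)%nat (S n) * a (S n))) by (intros; apply HWS; lia).
    rewrite <- scal_sum.
    specialize (IH ltac:(lia)). specialize (Ha (S n)). specialize (HD (S n)).
    nra.
Qed.

Definition wp_power (w alpha : R) (C I : R -> Prop) (phi : R -> R) (j : nat) (eta eta' : R) : R :=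
  powerRZ alpha (2 * Z.of_nat j - 3 * Z.of_nat (wp w C I phi j eta eta')).

Lemma wp_power_shift (w alpha : R) (C I : R -> Prop) (phi : R -> R) (j n : nat) (eta eta' : R) :
  alpha <> 0 -> (j <= n)%nat ->
  wp_power w alpha C I phi (S n - j) (eta + INR j * w) (eta' + INR j * w) =
  wp_power w alpha C I phi (n - j) (eta + INR j * w) (eta' + INR j * w)
  * wp_factor alpha C I phi (eta + (INR n - 1) * w) (eta' + (INR n - 1) * w).
Proof.
  intros Ha Hjn. rewrite Nat.sub_succ_l by exact Hjn.
  unfold wp_power, wp_factor. rewrite <- powerRZ_add by exact Ha. cbn [wp].
  replace (eta + INR j * w + (INR (n - j) - 1) * w) with (eta + (INR n - 1) * w)
    by (rewrite minus_INR by exact Hjn; ring).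
  replace (eta' + INR j * w + (INR (n - j) - 1) * w) with (eta' + (INR n - 1) * w)
    by (rewrite minus_INR by exact Hjn; ring).
  f_equal. rewrite Nat2Z.inj_add, Nat2Z.inj_succ. lia.
Qed.

Theorem mainTheorem6
    (w : R) (F G : R -> R -> R)
    (cL lenC eL lenE : R) (N : nat) (a0 l0 : nat -> R) (alpha Slip : R)
    (kappa K0 : nat) (M : nat -> nat) (eps : nat -> R) (s : R)
    (phip phim : R -> R)
    (HV : in_V w F G cL lenC eL lenE N a0 l0 alpha Slip kappa K0 M eps s phip phim)
    (t t' : R)
    (Hclose : dT t t' < lenE / (4 * Slip))
    (Hinv : forall m : Z,
        eqT (phip (t + IZR m * w + w)) (F (t + IZR m * w) (phip (t + IZR m * w))) /\
        eqT (phip (t' + IZR m * w + w)) (F (t' + IZR m * w) (phip (t' + IZR m * w))))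
    (n : nat) (Hn : (1 <= n)%nat) :
  dT (phip (t + INR n * w)) (phip (t' + INR n * w)) <=
    powerRZ alpha (2 * Z.of_nat n
                   - 3 * Z.of_nat (wp w (inC cL lenC) (I0set N a0 l0) phip n t t'))
      * dT (phip t) (phip t')
    + Slip * dT t t' *
      sum_f_R0 (fun i =>
        powerRZ alpha
          (2 * Z.of_nat (n - (i + 1))
           - 3 * Z.of_nat (wp w (inC cL lenC) (I0set N a0 l0) phip (n - (i + 1))
                              (t + INR (i + 1) * w) (t' + INR (i + 1) * w))))
        (n - 1).
Proof.
  unfold in_V in HV; cbv zeta in HV.
  destruct HV as (_ & (_ & HF & (Fx & _ & Hder & _) & _) & (HlC & HlE & Hdisj) & _ & _
                  & Halpha & HS & Hmap & Hbil & HSl & HdC & _).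
  assert (Hclose' : Slip * dT t t' < lenE / 4).
  { apply (Rmult_lt_compat_l Slip) in Hclose; [|exact HS].
    replace (Slip * (lenE / (4 * Slip))) with (lenE / 4) in Hclose by (field; lra). exact Hclose. }
  assert (Horbit : forall k : nat,
    eqT (phip (t + INR k * w)) (F (t + (INR k - 1) * w) (phip (t + (INR k - 1) * w))) /\
    eqT (phip (t' + INR k * w)) (F (t' + (INR k - 1) * w) (phip (t' + (INR k - 1) * w)))).
  { intros k. destruct (Hinv (Z.of_nat k - 1)%Z) as [Ht Ht'].
    rewrite minus_IZR, <- INR_IZR_INZ in Ht, Ht'.
    replace (t + (INR k - 1) * w + w) with (t + INR k * w) in Ht by ring.
    replace (t' + (INR k - 1) * w + w) with (t' + INR k * w) in Ht' by ring.
    split; assumption. }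
  eapply Rle_trans; [apply (affine_recursion_bound
    (fun k => dT (phip (t + INR k * w)) (phip (t' + INR k * w)))
    (fun k => wp_factor alpha (inC cL lenC) (I0set N a0 l0) phip
                (t + (INR k - 1) * w) (t' + (INR k - 1) * w))
    (fun j k => wp_power w alpha (inC cL lenC) (I0set N a0 l0) phip (k - j)
                  (t + INR j * w) (t' + INR j * w))
    (Slip * dT t t')) | ];
    [intros k; apply powerRZ_le; lra | | | | exact Hn |].
  - intros k. cbv beta. destruct (Horbit k) as [Hx Hy]. destruct (Horbit (S k)) as [Hx' Hy'].
    replace (INR (S k) - 1) with (INR k) in Hx', Hy' by (rewrite S_INR; ring).
    rewrite (dT_eqT _ _ _ _ Hx' Hy'),
      (dT_eq_of_sub_eq t t' (t + INR k * w) (t' + INR k * w)) by ring.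
    apply (dT_F_step F Fx cL lenC eL lenE alpha Slip); try assumption.
    + intros r x x'. apply Hbil.
    + rewrite (dT_eq_of_sub_eq _ _ t t') by ring. exact Hclose'.
  - intros j. rewrite Nat.sub_diag. reflexivity.
  - intros j k Hjk. apply wp_power_shift; [lra | exact Hjk].
  - right. cbv beta. rewrite INR_0, Rmult_0_l, !Rplus_0_r, Nat.sub_0_r. reflexivity.
Qed.
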